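(* In the setting of the context, suppose that $q\notin S$ and let $(\alpha,\beta)$ be the connected component of $\mathbb{R}\setminus S$ containing $q$. Let $n\in\mathbb{N}$ be such that $q\notin S(n)$, and suppose the event $\mathcal{E}^{(n)}$ occurs. Then $$\Bigl(\alpha-\frac{\lambda^n}{1-\lambda},\ \alpha\Bigr)\not\subset S.$$
   Context: Binary model: $T=\{1,2\}^*$ is the rooted binary tree of finite words (root = empty word, $|v|$ = length, $v|j$ = prefix of length $j$, $T_n$ = words of length $n$); $\{a_v\}_{|v|\ge1}$ are labels in $\{0,1\}$ (i.i.d. fair in the random model); $f(v)=\sum_{j=1}^{|v|}a_{v|j}\lambda^j$ for finite $v$, $f(\omega)=\sum_{j\ge1}a_{\omega|j}\lambda^j$ for $\omega\in\{1,2\}^{\mathbb{N}}$, and $S=f(\{1,2\}^{\mathbb{N}})$. Let $I=[0,\frac{\lambda}{1-\lambda}]$, $I(v)=f(v)+\lambda^{|v|}I$, and $S(n)=\bigcup_{|v|=n}I(v)$. Let $\lambda=1/\theta$ with $\theta$ a Pisot number (algebraic integer $>1$ whose other conjugates have modulus $<1$). Let $c_1\in(0,1)$ be a constant such that for all $n$ and all $a_1,\dots,a_n,b_1,\dots,b_n\in\{0,1\}$, $\sum a_i\lambda^i\neq\sum b_i\lambda^i$ implies $|\sum a_i\lambda^i-\sum b_i\lambda^i|\ge c_1\lambda^n$. Fix $\ell\in\mathbb{N}$ with $\frac{\lambda^{\ell+1}}{1-\lambda}<c_1$. Fix $q\in\mathbb{Q}$. For $n\ge1$: $L^{(n)}=\{v\in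 T_n: f(v)<q\}$; if $L^{(n)}\ne\emptyset$, $m^{(n)}=\max\{f(v):v\in L^{(n)}\}$ and $\mathcal{M}^{(n)}=\{v\in L^{(n)}: f(v)=m^{(n)}\}$. For $v\in T$, $T_v^+=\{vw: w\in\{1,2\}^*,\ a_{v(w|1)}=\cdots=a_{vw}=1\}$. Let $\Gamma^{(n)}=\bigcup\{T_v^+: v\in\mathcal{M}^{(n)}\}$, $\Gamma^{(n)}_j=\Gamma^{(n)}\cap T_j$, $\tau^{(n)}=\sup\{j:\Gamma^{(n)}_j\neq\emptyset\}$, and $\mathcal{E}^{(n)}=\{\tau^{(n)}<\infty \text{ and } |\Gamma^{(n)}_{\tau^{(n)}-j}|=2^{\ell-j}\text{ for } j=0,\dots,\ell\}$. *)

From HB Require Import structures.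
From mathcomp Require Import all_boot all_order all_algebra.
From mathcomp Require Import all_classical all_reals all_analysis.
From mathcomp Require Import complex.
Set Implicit Arguments. Unset Strict Implicit. Unset Printing Implicit Defensive.
Import Order.TTheory GRing.Theory Num.Theory numFieldNormedType.Exports.
Local Open Scope classical_set_scope.
Local Open Scope ring_scope.

(* Words of the binary tree {1,2}^*: letter 1 is encoded by [false],
   letter 2 by [true].  A finite word is a [seq bool]; |v| = size v,
   v|j = take j v.  An infinite word omega is a [nat -> bool], its prefix of
   length j is [mkseq omega j].  Labels a_v (|v| >= 1) are given by a
   function [a : seq bool -> bool] (true = 1, false = 0); the value at the
   empty word is irrelevant. *)

Section BinaryModel.
Variable R : realType.

Definition pisot (theta : R) : Prop :=
  1 < theta /\
  exists p : {poly int},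
    [/\ p \is monic,
        irreducible_poly (map_poly (intr : int -> rat) p),
        root (map_poly (intr : int -> R) p) theta &
        forall z : R[i], root (map_poly (intr : int -> R[i]) p) z ->
          z != Complex theta 0 -> `|z| < 1].

Variable lam : R.

Definition digsum (x : seq bool) : R :=
  \sum_(i < size x) (nth false x i)%:R * lam ^+ i.+1.

Variable a : seq bool -> bool.

Definition fw (v : seq bool) : R :=
  \sum_(j < size v) (a (take j.+1 v))%:R * lam ^+ j.+1.

Definition finf (omega : nat -> bool) : R :=
  limn (series (fun k : nat => (a (mkseq omega k.+1))%:R * lam ^+ k.+1)).

Definition Sset : set R := range finf.

Definition Iv (v : seq bool) : set R :=
  [set x | fw v <= x <= fw v + lam ^+ size v * (lam / (1 - lam))].

Definition Sn (n : nat) : set R :=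
  \bigcup_(v in [set v : seq bool | size v = n]) Iv v.

Variable q : rat.

Definition inL (n : nat) (v : n.-tuple bool) : bool := fw v < ratr q.

Definition inM (n : nat) (v : n.-tuple bool) : bool :=
  inL v && [forall w : n.-tuple bool, inL w ==> (fw w <= fw v)].

(* u in T_v^+ : u = v w with a_{v(w|1)} = ... = a_{vw} = 1 *)
Definition inTplus (v u : seq bool) : bool :=
  (v == take (size v) u) &&
  [forall k : 'I_(size u).+1, (size v < k)%N ==> a (take k u)].

Definition inGamma (n : nat) (u : seq bool) : bool :=
  [exists v : n.-tuple bool, inM v && inTplus v u].

Definition Gammaj (n j : nat) : {set j.-tuple bool} :=
  [set u : j.-tuple bool | inGamma n u].

(* E^(n): tau^(n) = sup{j : Gamma^(n)_j nonempty} is finite and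
   |Gamma^(n)_{tau-j}| = 2^(l-j) for j = 0..l.  (Levels tau-j < 0 would
   contain no words, so the event forces l <= tau.) *)
Definition eventE (l n : nat) : Prop :=
  exists tau : nat,
    [/\ Gammaj n tau != finset.set0,
        (forall j, (tau < j)%N -> Gammaj n j = finset.set0),
        (l <= tau)%N &
        forall j, (j <= l)%N -> #|Gammaj n (tau - j)| = (2 ^ (l - j))%N].

End BinaryModel.

(* Let [w0] be an infinite word whose prefix of length [tau] lies in
   [Gamma^(n)]. On [Gamma^(n)_j] the map [f] takes the single value
   [g j = m^(n) + sum_(n <= i < j) lam^(i+1)]. Put [K = tau - l]: as
   [|Gamma^(n)_K| = 1] and [|Gamma^(n)_tau| = 2^l], the level [tau] consists of
   all continuations of the unique word of level [K]. Hence a point [f(omega)]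
   of [S] below [q] either has its [K]-prefix in [Gamma^(n)], and then lies in
   [[g tau, hi]] with [hi = g K + lam^(K+1)/(1 - lam)], or its [K]-th partial
   sum is below [g K], by at least [c1 lam^K] by the separation property, and
   then [f(omega) <= hi - c1 lam^K]. Since [lam^(l+1)/(1 - lam) < c1], this
   leaves a hole ]hi - c1 lam^K, g tau[ in [S]; as [f(w0) >= g tau] and
   [q] outside [S(n)] gives [f(w0) < q], the left end [alpha] of the gap lies
   in [[g tau, hi]], within [lam^n/(1 - lam)] of the hole. *)

From HB Require Import structures.
From mathcomp Require Import all_boot all_order all_algebra.
From mathcomp Require Import all_classical all_reals all_analysis.
From mathcomp Require Import complex.
From mathcomp Require Import lra.
Set Implicit Arguments. Unset Strict Implicit. Unset Printing Implicit Defensive.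
Import Order.TTheory GRing.Theory Num.Theory numFieldNormedType.Exports.
Local Open Scope classical_set_scope.
Local Open Scope ring_scope.

Section LeftEndOfGap.
Variables (R : realType) (A : set R) (q alpha beta : R).
Hypotheses (notAq : ~ A q)
  (gapE : connected_component (~` A) q = `]alpha, beta[%classic).

Lemma in_gap : alpha < q < beta.
Proof.
have := connected_component_refl (notAq : (~` A) q).
by rewrite gapE /= in_itv.
Qed.

Lemma le_left_end_of_gap s : A s -> s < q -> s <= alpha.
Proof.
move=> As sq; rewrite leNgt; apply/negP => alpha_s.
have /andP[_ q_beta] := in_gap.
apply: (@connected_component_sub _ (~` A) q s) As.
by rewrite gapE /= in_itv /= alpha_s (lt_trans sq q_beta).
Qed.

Lemma left_end_of_gap_le b : (forall x, b < x < q -> ~ A x) -> alpha <= b.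
Proof.
move=> noA; rewrite leNgt; apply/negP => b_alpha.
have /andP[alpha_q _] := in_gap.
have : `[alpha, q] `<=` connected_component (~` A) q.
  apply: connected_component_max.
  - by rewrite /= in_itv /= (ltW alpha_q) lexx.
  - move=> x; rewrite /= in_itv /= => /andP[alpha_x]; rewrite le_eqVlt.
    case/orP => [/eqP -> //|xq]; apply: noA.
    by rewrite (lt_le_trans b_alpha alpha_x).
  - by apply/connected_intervalP; exact: interval_is_interval.
move=> /(_ alpha); rewrite gapE /= !in_itv /= lexx ltxx (ltW alpha_q).
by move=> /(_ isT).
Qed.

(* [alpha] is trapped in [[gt, hi]], so the midpoint of the hole
   ]hi - e, gt[ lies in ]alpha - d, alpha[. *)
Lemma left_of_gap_not_subset (hi e gt d s : R) :
  hi - e < gt <= hi -> A s -> gt <= s < q ->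
  (forall x, A x -> x < q -> x <= hi - e \/ gt <= x <= hi) ->
  e <= d -> ~ (`]alpha - d, alpha[%classic `<=` A).
Proof.
move=> /andP[lo_gt gt_hi] As /andP[gt_s sq] split_A e_d sub.
have gt_alpha : gt <= alpha := le_trans gt_s (le_left_end_of_gap As sq).
have alpha_hi : alpha <= hi.
  apply: left_end_of_gap_le => x /andP[hi_x xq] Ax.
  by case: (split_A x Ax xq) => [|/andP[]]; lra.
pose p := (hi - e + gt) / 2.
have /sub Ap : `]alpha - d, alpha[%classic p.
  by rewrite /= in_itv /= /p; apply/andP; split; lra.
have pq : p < q by rewrite /p; lra.
by case: (split_A p Ap pq) => [|/andP[]]; rewrite /p; lra.
Qed.

End LeftEndOfGap.

Lemma take_mkseq (T : Type) (f : nat -> T) k N :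
  (k <= N)%N -> take k (mkseq f N) = mkseq f k.
Proof. by move=> kN; rewrite /mkseq -map_take take_iota (minn_idPl kN). Qed.

Lemma series_cat (V : zmodType) (u : V ^nat) m n : (m <= n)%N ->
  series u n = series u m + \sum_(m <= k < n) u k.
Proof. by move=> /subnK <-; rewrite series_addn. Qed.

Definition fterm (R : realType) (lam : R) (a : seq bool -> bool)
    (w : nat -> bool) (i : nat) : R :=
  (a (mkseq w i.+1))%:R * lam ^+ i.+1.

Section PartialSums.
Context {R : realType} {lam : R} {a : seq bool -> bool}.
Hypotheses (lam_gt0 : 0 < lam) (lam_lt1 : lam < 1).
Local Notation fterm := (fterm lam a).

Lemma fw_mkseq w N : fw lam a (mkseq w N) = series (fterm w) N.
Proof.
rewrite /fw size_mkseq seriesEord /=; apply: eq_bigr => i _.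
by rewrite /fterm take_mkseq.
Qed.

Lemma digsum_labels w N :
  digsum lam (mkseq (fun i => a (mkseq w i.+1)) N) = series (fterm w) N.
Proof.
rewrite /digsum size_mkseq seriesEord /=; apply: eq_bigr => i _.
by rewrite nth_mkseq.
Qed.

Lemma fterm_ge0 w i : 0 <= fterm w i.
Proof. by rewrite mulr_ge0 // exprn_ge0 // ltW. Qed.

Lemma fterm_le w i : fterm w i <= lam ^+ i.+1.
Proof.
by rewrite /fterm; case: (a _); rewrite ?mul1r ?mul0r // exprn_ge0 // ltW.
Qed.

Lemma sum_geom_tail k N : (k <= N)%N ->
  \sum_(k <= i < N) lam ^+ i.+1 = (lam ^+ k.+1 - lam ^+ N.+1) / (1 - lam).
Proof.
move=> kN; apply: (@mulIf _ (1 - lam)); first by rewrite subr_eq0 gt_eqF.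
rewrite divfK ?subr_eq0 ?gt_eqF // mulr_suml.
under eq_bigr do rewrite mulrBr mulr1 -exprSr.
rewrite -opprB -(telescope_sumr (fun i => lam ^+ i.+1) kN) -sumrN.
by apply: eq_bigr => i _; rewrite opprB.
Qed.

Lemma series_fterm_nondecreasing w : nondecreasing_seq (series (fterm w)).
Proof.
move=> k N kN; rewrite (series_cat _ kN) lerDl.
by apply: sumr_ge0 => i _; exact: fterm_ge0.
Qed.

Lemma series_fterm_le_tail w k N :
  series (fterm w) N <= series (fterm w) k + lam ^+ k.+1 / (1 - lam).
Proof.
have tail_ge0 j : 0 <= lam ^+ j / (1 - lam).
  by rewrite divr_ge0 ?exprn_ge0 ?subr_ge0 ?ltW.
have [kN|Nk] := leqP k N.
  rewrite (series_cat _ kN) lerD2l.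
  apply: (le_trans (ler_sum _ (fun i _ => fterm_le w i))).
  rewrite sum_geom_tail //.
  apply: ler_wpM2r; first by rewrite invr_ge0 subr_ge0 ltW.
  by rewrite gerBl exprn_ge0 // ltW.
apply: (le_trans (@series_fterm_nondecreasing w N k (ltnW Nk))).
by rewrite lerDl tail_ge0.
Qed.

Lemma series_fterm_cvg w : cvgn (series (fterm w)).
Proof.
apply: nondecreasing_is_cvgn; first exact: series_fterm_nondecreasing.
exists (series (fterm w) 0 + lam / (1 - lam)) => _ [N _ <-].
exact: series_fterm_le_tail.
Qed.

Lemma series_fterm_le_finf w k : series (fterm w) k <= finf lam a w.
Proof.
apply: nondecreasing_cvgn_le; first exact: series_fterm_nondecreasing.
exact: series_fterm_cvg.
Qed.

Lemma finf_le_tail w k :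
  finf lam a w <= series (fterm w) k + lam ^+ k.+1 / (1 - lam).
Proof.
apply: limr_le; first exact: series_fterm_cvg.
by apply: nearW => N; exact: series_fterm_le_tail.
Qed.

Lemma sum_fterm_lt_geom w m k j : (m <= k < j)%N -> ~~ a (mkseq w k.+1) ->
  \sum_(m <= i < j) fterm w i < \sum_(m <= i < j) lam ^+ i.+1.
Proof.
move=> /andP[mk kj] a0.
rewrite !(big_cat_nat mk (ltnW kj)) !(big_ltn kj) /=.
have -> : fterm w k = 0 by rewrite /fterm (negbTE a0) mul0r.
have le_geom p r : \sum_(p <= i < r) fterm w i <= \sum_(p <= i < r) lam ^+ i.+1.
  by apply: ler_sum => i _; exact: fterm_le.
have := le_geom m k; have := le_geom k.+1 j; have := exprn_gt0 k.+1 lam_gt0.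
lra.
Qed.

End PartialSums.

(* A set of [#|T| ^ l] words of length [K + l] sharing their first [K]
   letters contains all such words: otherwise the suffix map would inject
   one more word into the [#|T| ^ l] suffixes. *)
Lemma mem_prefix_class (T : finType) (K l N : nat) (A : {set N.-tuple T})
    (y : seq T) (x : N.-tuple T) :
  (K + l = N)%N -> #|A| = (#|T| ^ l)%N ->
  (forall u, u \in A -> take K u = y) -> take K x = y -> x \in A.
Proof.
move=> KlN cardA prefA prefx; apply/negPn/negP => xNA.
have lt_idx (i : 'I_l) : (K + i < N)%N by rewrite -KlN ltn_add2l.
pose suffix (u : N.-tuple T) := [tuple tnth u (Ordinal (lt_idx i)) | i < l].
have suffix_inj : {in x |: A &, injective suffix}.
  move=> u v uA vA eq_suffix; apply: eq_from_tnth => i.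
  have pref_eq : take K u = take K v.
    move: uA vA; rewrite !in_setU1.
    by move=> /predU1P[->|/prefA->] /predU1P[->|/prefA->].
  have [iK|Ki] := ltnP i K.
    rewrite (tnth_nth (tnth x i) u) (tnth_nth (tnth x i) v).
    by rewrite -(nth_take _ iK u) -(nth_take _ iK v) pref_eq.
  have il : (i - K < l)%N by rewrite ltn_subLR // KlN.
  have idx : Ordinal (lt_idx (Ordinal il)) = i.
    by apply: val_inj; rewrite /= subnKC.
  have := congr1 (fun t => tnth t (Ordinal il)) eq_suffix.
  by rewrite !tnth_mktuple idx.
have := max_card (mem (suffix @: (x |: A))).
by rewrite card_in_imset // cardsU1 xNA cardA card_tuple add1n ltnn.
Qed.

Definition prefix_tuple (N : nat) (w : nat -> bool) : N.-tuple bool :=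
  Tuple (introT eqP (size_mkseq w N)).

Lemma tuple_mkseq_nth (T : Type) (x0 : T) (j : nat) (u : j.-tuple T) :
  (u : seq T) = mkseq (nth x0 u) j.
Proof. by have := mkseq_nth x0 u; rewrite size_tuple. Qed.

Section Gamma.
Context {R : realType} {lam : R} {a : seq bool -> bool} {q : rat}.

Lemma inTplus_mkseq {n N} (v : n.-tuple bool) w : (n <= N)%N ->
  inTplus a v (mkseq w N) <->
  val v = mkseq w n /\ forall k, (n < k <= N)%N -> a (mkseq w k).
Proof.
move=> nN; rewrite /inTplus size_tuple take_mkseq // size_mkseq; split.
  move=> /andP[/eqP v_pref /forallP ones]; split => // k /andP[nk kN].
  by have := ones (Ordinal (kN : (k < N.+1)%N)); rewrite /= nk take_mkseq.
move=> [-> ones]; rewrite eqxx; apply/forallP => k; apply/implyP => nk.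
have kN : (k <= N)%N by rewrite -ltnS.
by rewrite take_mkseq // ones // nk.
Qed.

Lemma inGamma_mkseq {n N} w : (n <= N)%N ->
  inGamma lam a q n (mkseq w N) <->
  inM lam a q (prefix_tuple n w) /\ forall k, (n < k <= N)%N -> a (mkseq w k).
Proof.
move=> nN; split.
  move=> /existsP[v /andP[Mv /(inTplus_mkseq v w nN)[v_pref ones]]].
  by have <- : v = prefix_tuple n w by apply: val_inj.
move=> [M_pref ones]; apply/existsP; exists (prefix_tuple n w).
by rewrite M_pref; apply/(inTplus_mkseq _ w nN).
Qed.

Lemma inGamma_size {n u} : inGamma lam a q n u -> (n <= size u)%N.
Proof.
move=> /existsP[v /andP[_ /andP[/eqP v_pref _]]].
by rewrite -(size_tuple v) v_pref size_take; case: ltnP => // /ltnW.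
Qed.

Lemma inGamma_prefix {w n} j {N} : (n <= j <= N)%N ->
  inGamma lam a q n (mkseq w N) -> inGamma lam a q n (mkseq w j).
Proof.
move=> /andP[nj jN] /(inGamma_mkseq w (leq_trans nj jN))[M_pref ones].
apply/(inGamma_mkseq w nj); split => // k /andP[nk kj].
by rewrite ones // nk (leq_trans kj jN).
Qed.

Lemma inM_max {n} (v w : n.-tuple bool) :
  inM lam a q v -> inL lam a q w -> fw lam a w <= fw lam a v.
Proof. by move=> /andP[_ /forallP max_v] Lw; have := max_v w; rewrite Lw. Qed.

Lemma inM_eq {n} (v w : n.-tuple bool) :
  inM lam a q v -> inM lam a q w -> fw lam a w = fw lam a v.
Proof.
move=> Mv Mw; apply/le_anti; rewrite !inM_max //.
  by case/andP: Mv.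
by case/andP: Mw.
Qed.

Lemma inM_fw_eq {n} (v w : n.-tuple bool) :
  inM lam a q v -> inL lam a q w -> fw lam a w = fw lam a v -> inM lam a q w.
Proof.
move=> /andP[_ /forallP max_v] Lw fw_eq; rewrite /inM Lw fw_eq.
exact/forallP.
Qed.

End Gamma.

(* [f] of the word [w0|n] followed by [j - n] labels equal to 1; when [w0|n]
   is in [M^(n)] this is the common value of [f] on [Gamma^(n)_j]. *)
Definition gamma_value (R : realType) (lam : R) (a : seq bool -> bool)
    (w0 : nat -> bool) (n j : nat) : R :=
  series (fterm lam a w0) n + \sum_(n <= i < j) lam ^+ i.+1.

Section MaxBranch.
Context {R : realType} {lam : R} {a : seq bool -> bool} {q : rat}.
Variables (n : nat) (w0 : nat -> bool).
Hypotheses (lam_gt0 : 0 < lam) (lam_lt1 : lam < 1).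
Hypothesis M_w0 : inM lam a q (prefix_tuple n w0).
Local Notation gamma_value := (gamma_value lam a w0 n).

Lemma gamma_value_add_tail j k : (n <= j <= k)%N ->
  gamma_value k + lam ^+ k.+1 / (1 - lam) =
  gamma_value j + lam ^+ j.+1 / (1 - lam).
Proof.
move=> /andP[nj jk].
rewrite /gamma_value !sum_geom_tail ?(leq_trans nj jk) //.
by rewrite -!addrA -!mulrDl !subrK.
Qed.

Lemma series_inGamma w j : (n <= j)%N ->
  inGamma lam a q n (mkseq w j) -> series (fterm lam a w) j = gamma_value j.
Proof.
move=> nj /(inGamma_mkseq w nj)[Mw ones].
rewrite (series_cat _ nj) /gamma_value; congr (_ + _).
  by have := inM_eq M_w0 Mw; rewrite /= !fw_mkseq.
apply: eq_big_nat => i /andP[ni ij].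
by rewrite /fterm ones ?mul1r // ltnS ni ij.
Qed.

Lemma series_notinGamma w j :
  finf lam a w < ratr q -> (n <= j)%N -> ~~ inGamma lam a q n (mkseq w j) ->
  series (fterm lam a w) j < gamma_value j.
Proof.
move=> finf_q nj Gw.
have Lw : inL lam a q (prefix_tuple n w).
  rewrite /inL /= fw_mkseq.
  exact: le_lt_trans (series_fterm_le_finf lam_gt0 lam_lt1 _ _) finf_q.
rewrite (series_cat _ nj) /gamma_value.
have := inM_max M_w0 Lw; rewrite /= !fw_mkseq le_eqVlt => /orP[/eqP same|lt].
  have Mw : inM lam a q (prefix_tuple n w).
    by apply: inM_fw_eq M_w0 Lw _; rewrite /= !fw_mkseq.
  have [[[|k] /andP[/andP[nk kj] ak0]]|no_zero] :=
    pselect (exists k, (n < k <= j)%N && ~~ a (mkseq w k)).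
  - by rewrite ltn0 in nk.
  - by rewrite same ltrD2l (sum_fterm_lt_geom lam_gt0 _ ak0) // -ltnS nk.
  case/negP: Gw; apply/(inGamma_mkseq w nj); split => // k nkj.
  by apply/negPn/negP => ak0; apply: no_zero; exists k; rewrite nkj.
apply: ltr_leD => //; apply: ler_sum => i _; exact: fterm_le.
Qed.

Lemma finf_lt_notin_Sn : ~ Sn lam a n (ratr q) -> finf lam a w0 < ratr q.
Proof.
move=> notSnq.
have m_lt_q : series (fterm lam a w0) n < ratr q.
  by have /andP[+ _] := M_w0; rewrite /inL /= fw_mkseq.
apply: le_lt_trans (finf_le_tail lam_gt0 lam_lt1 w0 n) _.
rewrite ltNge; apply/negP => q_le; apply: notSnq.
exists (mkseq w0 n); first by rewrite /= size_mkseq.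
by rewrite /Iv /= size_mkseq fw_mkseq (ltW m_lt_q) mulrA -exprSr.
Qed.

End MaxBranch.

Section Event.
Context {R : realType} {lam : R} {a : seq bool -> bool} {q : rat}.
Variables (n l tau : nat) (w0 : nat -> bool) (c1 : R).
Hypotheses (lam_gt0 : 0 < lam) (lam_lt1 : lam < 1).
Hypothesis Gamma_w0 : inGamma lam a q n (mkseq w0 tau).
Hypothesis l_le_tau : (l <= tau)%N.
Hypotheses (card_GammaK : #|Gammaj lam a q n (tau - l)| = 1%N)
  (card_Gamma_tau : #|Gammaj lam a q n tau| = (2 ^ l)%N).
Local Notation K := (tau - l)%N.
Local Notation g := (gamma_value lam a w0 n).

Let n_le_tau : (n <= tau)%N.
Proof. by have := inGamma_size Gamma_w0; rewrite size_mkseq. Qed.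

Let M_w0 : inM lam a q (prefix_tuple n w0).
Proof. by have [] := (inGamma_mkseq w0 n_le_tau).1 Gamma_w0. Qed.

Let n_le_K : (n <= K)%N.
Proof.
have : Gammaj lam a q n K != finset.set0 by rewrite -card_gt0 card_GammaK.
by case/set0Pn => u; rewrite inE => /inGamma_size; rewrite size_tuple.
Qed.

Let nK_tau : (n <= K <= tau)%N.
Proof. by rewrite n_le_K leq_subr. Qed.

Lemma inGamma_K_tau w :
  inGamma lam a q n (mkseq w K) -> inGamma lam a q n (mkseq w tau).
Proof.
have [y GammaK] : exists y, Gammaj lam a q n K = [set y]%SET.
  by apply/cards1P; rewrite card_GammaK.
have pref_y v : inGamma lam a q n (mkseq v K) -> mkseq v K = y.
  move=> Gv; have : prefix_tuple K v \in Gammaj lam a q n K by rewrite inE.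
  by rewrite GammaK inE => /eqP <-.
move=> Gw; have : prefix_tuple tau w \in Gammaj lam a q n tau.
  apply: (mem_prefix_class (K := K) (l := l) (y := val y)); first exact: subnK.
  - by rewrite card_Gamma_tau card_bool.
  - move=> u; rewrite inE (tuple_mkseq_nth false) take_mkseq ?leq_subr // => Gu.
    exact/pref_y/(inGamma_prefix nK_tau).
  - by rewrite /= take_mkseq ?leq_subr // pref_y.
by rewrite inE.
Qed.

Lemma gamma_value_le_finf_lt :
  ~ Sn lam a n (ratr q) -> g tau <= finf lam a w0 < ratr q.
Proof.
move=> notSnq; rewrite (finf_lt_notin_Sn lam_gt0 lam_lt1 M_w0 notSnq) andbT.
by rewrite -(series_inGamma M_w0 n_le_tau Gamma_w0) series_fterm_le_finf.
Qed.

Lemma gamma_gap_bounds : lam ^+ l.+1 / (1 - lam) < c1 ->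
  g K + lam ^+ K.+1 / (1 - lam) - c1 * lam ^+ K < g tau <=
  g K + lam ^+ K.+1 / (1 - lam).
Proof.
move=> sep_scale; rewrite -(gamma_value_add_tail w0 lam_lt1 nK_tau).
have -> : lam ^+ tau.+1 = lam ^+ K * lam ^+ l.+1 by rewrite -exprD addnS subnK.
have : lam ^+ K * (lam ^+ l.+1 / (1 - lam)) < lam ^+ K * c1.
  by rewrite ltr_pM2l ?exprn_gt0.
have : 0 <= lam ^+ K * (lam ^+ l.+1 / (1 - lam)).
  by rewrite mulr_ge0 ?divr_ge0 ?exprn_ge0 ?subr_ge0 ?ltW.
rewrite !mulrA (mulrC c1) => tail_ge0 tail_lt; apply/andP; split; lra.
Qed.

Lemma gap_width_le : c1 <= 1 -> c1 * lam ^+ K <= lam ^+ n / (1 - lam).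
Proof.
move=> c1_le1.
have lamK_le : lam ^+ K <= lam ^+ n by apply: ler_wiXn2l; rewrite ?ltW.
have lamn_le : lam ^+ n <= lam ^+ n / (1 - lam).
  rewrite ler_pdivlMr ?subr_gt0 //.
  apply: ler_piMr; first exact: exprn_ge0 (ltW lam_gt0).
  by rewrite gerBl ltW.
apply: le_trans lamn_le; apply: le_trans lamK_le.
exact: ler_piMl (exprn_ge0 K (ltW lam_gt0)) c1_le1.
Qed.

Hypothesis sep : forall x y : K.-tuple bool, digsum lam x != digsum lam y ->
  c1 * lam ^+ K <= `|digsum lam x - digsum lam y|.

Lemma finf_dichotomy w : finf lam a w < ratr q ->
  finf lam a w <= g K + lam ^+ K.+1 / (1 - lam) - c1 * lam ^+ K \/
  g tau <= finf lam a w <= g K + lam ^+ K.+1 / (1 - lam).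
Proof.
move=> finf_q; have [GwK|GwK] := boolP (inGamma lam a q n (mkseq w K)).
  have Gw := inGamma_K_tau GwK.
  right; rewrite -(series_inGamma M_w0 n_le_tau Gw) series_fterm_le_finf //=.
  rewrite -(gamma_value_add_tail w0 lam_lt1 nK_tau).
  by rewrite -(series_inGamma M_w0 n_le_tau Gw) finf_le_tail.
left.
have lt := series_notinGamma lam_gt0 lam_lt1 M_w0 finf_q n_le_K GwK.
have GK := series_inGamma M_w0 n_le_K (inGamma_prefix nK_tau Gamma_w0).
have := @sep (prefix_tuple K (fun i => a (mkseq w i.+1)))
  (prefix_tuple K (fun i => a (mkseq w0 i.+1))).
rewrite /= !digsum_labels GK (lt_eqF lt) => /(_ isT).
rewrite ler0_norm ?subr_le0 ?(ltW lt) // opprB => sep_w.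
have := finf_le_tail (a := a) lam_gt0 lam_lt1 w K; lra.
Qed.

End Event.

Theorem lemma4p3 (R : realType) (theta : R) (a : seq bool -> bool)
    (c1 : R) (l : nat) (q : rat) (alpha beta : R) (n : nat) :
  pisot theta ->
  0 < c1 < 1 ->
  (forall (m : nat) (x y : m.-tuple bool),
      digsum theta^-1 x != digsum theta^-1 y ->
      c1 * theta^-1 ^+ m <= `|digsum theta^-1 x - digsum theta^-1 y|) ->
  theta^-1 ^+ l.+1 / (1 - theta^-1) < c1 ->
  ~ Sset theta^-1 a (ratr q) ->
  connected_component (~` Sset theta^-1 a) (ratr q) = `]alpha, beta[%classic ->
  (1 <= n)%N ->
  ~ Sn theta^-1 a n (ratr q) ->
  eventE theta^-1 a q l n ->
  ~ (`]alpha - theta^-1 ^+ n / (1 - theta^-1), alpha[%classic `<=` Sset theta^-1 a).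
Proof.
move=> [theta_gt1 _] /andP[_ c1_lt1] sep sep_scale notSq gapE _ notSnq
  [tau [/set0Pn[u Gu] _ l_le_tau card_Gamma]].
have theta_gt0 : 0 < theta := lt_trans ltr01 theta_gt1.
have lam_gt0 : 0 < theta^-1 by rewrite invr_gt0.
have lam_lt1 : theta^-1 < 1 by rewrite invf_lt1.
pose w0 := nth false u.
have Gamma_w0 : inGamma theta^-1 a q n (mkseq w0 tau).
  by rewrite -(tuple_mkseq_nth false u); rewrite inE in Gu.
have card_GammaK := card_Gamma l (leqnn l); rewrite subnn expn0 in card_GammaK.
have card_Gamma_tau := card_Gamma 0%N (leq0n l).
rewrite !subn0 in card_Gamma_tau.
pose g := gamma_value theta^-1 a w0 n; pose K := (tau - l)%N.
apply: (left_of_gap_not_subset notSq gapE (s := finf theta^-1 a w0)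
  (hi := g K + theta^-1 ^+ K.+1 / (1 - theta^-1)) (e := c1 * theta^-1 ^+ K)
  (gt := g tau)); rewrite {}/g {}/K.
- exact: (gamma_gap_bounds w0 lam_gt0 lam_lt1 l_le_tau card_GammaK sep_scale).
- by exists w0.
- exact: (gamma_value_le_finf_lt lam_gt0 lam_lt1 Gamma_w0 notSnq).
- move=> _ [w _ <-].
  exact: (finf_dichotomy lam_gt0 lam_lt1 Gamma_w0 l_le_tau card_GammaK
    card_Gamma_tau (sep _)).
- exact: (gap_width_le lam_gt0 lam_lt1 card_GammaK (ltW c1_lt1)).
Qed.
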